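(* Let $G$ be a directed graph in which every vertex is reachable from a vertex $s$, let $t$ be a vertex of $G$, and let $k\ge 1$ be an integer. Assume that for no $\ell\in\{k,\dots,2k-1\}$ does $G$ contain an $(s,t)$-path of length exactly $dist_G(s,t)+\ell$, and that $G$ contains an $(s,t)$-path of length at least $dist_G(s,t)+k$; let $P$ be such a path of minimum length. For $i\ge0$ let $L_i$ be the set of vertices at distance exactly $i$ from $s$. Let $p$ be the smallest integer $i\ge1$ such that $L_i$ contains more than one vertex of $P$, and let $u,v$ be the first and second vertices of $P$ (in order along $P$) lying in $L_p$. Let $x$ be the vertex of $P_{u,v}$ such that $P_{u,x}$ has length exactly $k$ (the path $P_{u,v}$ has more than $k$ edges). Let $k'=\min\{k+1,|V(P_{x,v})|\}$ and let $y$ be the first vertex of the subpath of $P_{u,v}$ formed by its last $k'$ vertices. Let $k''=\min\{2k+1,|V(P_{v,t})|\}$ and let $z$ be the last vertex of the subpath of $P_{v,t}$ formed by its first $k''$ vertices. Then every path $P'$ from $u$ to $x$ of length at most $k$ in the induced subgraph $G[\bigcup_{i\ge p}L_i]$ that is vertex disjoint from $P_{y,z}$ is vertex disjoint from $P_{x,v}$ except at the vertex $x$.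
   Context: Paths are simple directed paths; the length of a path is its number of edges. $dist_G(a,b)$ denotes the length of a shortest directed $(a,b)$-path in $G$. For a path $P$ and vertices $a,b$ on it (with $a$ before $b$), $P_{a,b}$ denotes the subpath of $P$ from $a$ to $b$. *)

From mathcomp Require Import all_boot.
Set Implicit Arguments. Unset Strict Implicit. Unset Printing Implicit Defensive.

Section Defs.
Variables (V : finType) (e : rel V).

Definition spath (a b : V) (q : seq V) : bool :=
  if q is x :: q' then [&& x == a, path e x q', uniq q & last x q' == b]
  else false.

Definition plen (q : seq V) : nat := (size q).-1.

(* dist a b = length of a shortest directed (a,b)-path
   (equal to #|V| when b is unreachable from a). *)
Definition dist (a b : V) : nat :=
  find (fun n => [exists q : (n.+1).-tuple V, spath a b q]) (iota 0 #|V|).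

End Defs.

(* subpath of P between positions i and j (inclusive, 0-based) *)
Definition segment (T : Type) (P : seq T) (i j : nat) : seq T :=
  drop i (take j.+1 P).

From mathcomp Require Import all_boot zify.
Set Implicit Arguments. Unset Strict Implicit. Unset Printing Implicit Defensive.

(* Suppose P' meets P strictly after x.  Let w be the first vertex of P' (after
   j < k steps from u) lying on P after x, at position m of P; then
   dist s w <= p + j < p + k.  Two s-t paths control where m can be.
   - A shortest s-v path lies in the layers below p except at v, while P lies in
     the layers >= p from u on (distances grow by at most 1 along P, so each
     layer 0 < i < p meets P before u, and only once); so it extends by P_{v,t}
     to an s-t path of length p + |P_{v,t}|, shorter than P.  By minimality of
     P this length is < dist s t + k, and it is >= dist s t.
   - P_{s,u}, then P'_{u,w}, then P_{w,t} is again an s-t path (P' stays in the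
     layers >= p), shorter than P since w comes after x = P[iu + k].
   If m >= iv + 2k, then dist s t <= dist s w + |P_{w,t}| forces
   dist s w > p + k; if m + k < iv, the second path is shorter than P, hence
   than dist s t + k, yet longer than p + |P_{v,t}| + k >= dist s t + k.
   So w lies on P_{y,z}, which P' avoids. *)

Section Segments.
Variable T : Type.
Implicit Types (P : seq T) (i j m : nat).

Lemma size_segment P i j : i <= j < size P -> size (segment P i j) = j.+1 - i.
Proof. by move=> hij; rewrite size_drop size_take; case: (ltnP j.+1 (size P)); lia. Qed.

Lemma nth_segment x0 P i j m : i + m <= j -> nth x0 (segment P i j) m = nth x0 P (i + m).
Proof. by move=> h; rewrite nth_drop nth_take //; lia. Qed.

Lemma behead_segment P i j : behead (segment P i j) = segment P i.+1 j.
Proof. by rewrite /segment -drop1 drop_drop add1n. Qed.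

Lemma count_nth_gt1 x0 (a : pred T) P i j : i < j < size P ->
  a (nth x0 P i) -> a (nth x0 P j) -> 1 < count a P.
Proof.
elim: P i j => [|y P IH] [|i] [|j] //=; rewrite ?ltn0 ?andbF // => hij ai aj.
- have : has a P by apply/(has_nthP x0); exists j.
  by rewrite has_count ai; lia.
- by have := IH i j hij ai aj; lia.
Qed.

End Segments.

Section SegmentMembership.
Variables (T : eqType) (P : seq T).

Lemma mem_segmentP x0 i j w : w \in segment P i j ->
  exists2 m, nth x0 P m = w & i <= m <= j /\ m < size P.
Proof.
case/(nthP x0) => m; rewrite size_drop size_take => hm <-.
have hm' : i + m <= j /\ i + m < size P by move: hm; case: (ltnP j.+1 (size P)); lia.
by exists (i + m); [rewrite nth_segment //; lia | lia].
Qed.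

Lemma mem_segment x0 i j m : i <= m <= j -> m < size P -> nth x0 P m \in segment P i j.
Proof.
move=> hm hmP; have -> : m = i + (m - i) by lia.
rewrite -(nth_segment x0 P (j := j)); last by lia.
by apply: mem_nth; rewrite size_drop size_take; case: (ltnP j.+1 (size P)); lia.
Qed.

Lemma segments_disjoint i1 j1 i2 j2 w : uniq P -> j1 < i2 ->
  w \in segment P i1 j1 -> w \notin segment P i2 j2.
Proof.
move=> hU hlt /(mem_segmentP w) [m1 <- h1]; apply/negP => /(mem_segmentP w) [m2 + h2].
by move/eqP; rewrite nth_uniq //; lia.
Qed.

End SegmentMembership.

Arguments segments_disjoint {T P} [i1 j1 i2 j2 w].

Lemma ivt_nat (f : nat -> nat) n c : f 0 <= c < f n ->
  (forall j, j < n -> f j.+1 <= (f j).+1) -> exists2 j, j < n & f j = c.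
Proof.
elim: n => [|n IH] hc hstep; first lia.
case: (ltnP c (f n)) => h.
- by case: IH => [|j hj|j hj <-]; [lia | apply: hstep; lia | exists j; lia].
- by exists n => //; have := hstep n (ltnSn n); lia.
Qed.

Section SimplePaths.
Variables (V : finType) (e : rel V).
Implicit Types (a b c : V) (q : seq V).

Lemma spathP x0 a b q : spath e a b q <->
  [/\ 0 < size q, nth x0 q 0 = a, nth x0 q (size q).-1 = b, uniq q &
      forall i, i.+1 < size q -> e (nth x0 q i) (nth x0 q i.+1)].
Proof.
case: q => [|y r] /=; first by split => // -[].
rewrite -[size r]/((size (y :: r)).-1) nth_last /=.
split => [/and4P[/eqP -> hp hu /eqP hl] | [_ -> hl hu hp]].
- by split => // i hi; move/(pathP x0): hp; apply.
- by rewrite eqxx hu hl eqxx /= !andbT; apply/(pathP x0).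
Qed.

Lemma spath_head a b q : spath e a b q -> q = a :: behead q.
Proof. by case: q => //= y r /and4P[/eqP -> _ _ _]. Qed.

Lemma spath_uniq a b q : spath e a b q -> uniq q.
Proof. by case/(spathP a). Qed.

Lemma spath_nth_inj x0 a b q i j : spath e a b q -> i < size q -> j < size q ->
  nth x0 q i = nth x0 q j -> i = j.
Proof. by move=> /spath_uniq hU hi hj /eqP; rewrite nth_uniq // => /eqP. Qed.

Lemma spath_segment x0 a b q i j : spath e a b q -> i <= j < size q ->
  spath e (nth x0 q i) (nth x0 q j) (segment q i j).
Proof.
case/(spathP x0) => _ _ _ hU hstep hij.
apply/(spathP x0); rewrite size_segment //; split.
- lia.
- by rewrite nth_segment ?addn0 //; lia.
- by rewrite nth_segment; [congr nth; lia | lia].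
- by rewrite drop_uniq // take_uniq.
- by move=> m hm; rewrite !nth_segment ?addnS; [apply: hstep | ..]; lia.
Qed.

Lemma spath_cat a b c q1 q2 : spath e a b q1 -> spath e b c q2 ->
  (forall w, w \in q1 -> w \notin behead q2) -> spath e a c (q1 ++ behead q2).
Proof.
case: q1 => [//|y1 r1]; case: q2 => [//|y2 r2] /=.
move=> /and4P[/eqP -> p1 u1 /eqP l1] /and4P[/eqP -> p2 /andP[_ u2] /eqP l2] hdis.
rewrite eqxx cat_path p1 l1 p2 last_cat l1 l2 eqxx /= !andbT.
have U : uniq ((a :: r1) ++ r2).
  rewrite cat_uniq u2 andbT; apply/andP; split; first exact: u1.
  by apply/hasPn => w hw; apply/negP => /hdis; rewrite hw.
exact: U.
Qed.

Lemma plen_cat a b c q1 q2 : spath e a b q1 -> spath e b c q2 ->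
  plen (q1 ++ behead q2) = plen q1 + plen q2.
Proof.
move=> /spath_head -> /spath_head ->.
by rewrite /plen /= size_cat; lia.
Qed.

Lemma plen_spath_lt_card a b q : spath e a b q -> plen q < #|V|.
Proof.
move=> h; rewrite /plen prednK; last by rewrite (spath_head h).
by rewrite -(card_uniqP (spath_uniq h)) max_card.
Qed.

Lemma dist_le_card a b : dist e a b <= #|V|.
Proof. by rewrite /dist -[X in _ <= X](size_iota 0) find_size. Qed.

Lemma dist_le_plen a b q : spath e a b q -> dist e a b <= plen q.
Proof.
move=> h; have hV := plen_spath_lt_card h.
rewrite /dist; case: leqP => // /(before_find 0); rewrite nth_iota // add0n.
have hsz : size q = (plen q).+1 by rewrite /plen (spath_head h).
suff -> : [exists q' : (plen q).+1.-tuple V, spath e a b q'] by [].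
by apply/existsP; exists (tcast hsz (in_tuple q)); rewrite val_tcast.
Qed.

Lemma shortest_spath a b : dist e a b < #|V| ->
  exists2 q, spath e a b q & plen q = dist e a b.
Proof.
move=> hlt; have := hlt; rewrite -[X in _ < X](size_iota 0) -has_find.
move=> /(nth_find 0); rewrite -/(dist e a b) nth_iota ?add0n //.
by case/existsP => q hq; exists q => //; rewrite /plen size_tuple.
Qed.

Lemma dist_path_last x w : path e x w -> dist e x (last x w) <= size w.
Proof.
case/shortenP => w' hw' hU hsub.
have : spath e x (last x w') (x :: w') by apply/and4P; split.
move/dist_le_plen/leq_trans; apply; apply: uniq_leq_size hsub.
by case/andP: hU.
Qed.

(* No reachability hypothesis is needed: an unreachable vertex gets the junk
   distance #|V|, which bounds every distance. *)
Lemma dist_spath_trans a b c q : spath e b c q -> dist e a c <= dist e a b + plen q.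
Proof.
move=> hq.
case: (ltnP (dist e a b) #|V|) => [/shortest_spath [r hr <-] | hV]; last first.
  exact: leq_trans (dist_le_card _ _) (leq_trans hV (leq_addr _ _)).
have := hr; rewrite (spath_head hr) /= => /and4P[_ pr _ /eqP lr].
have := hq; rewrite (spath_head hq) /= => /and4P[_ pq _ /eqP lq].
have : path e a (behead r ++ behead q) by rewrite cat_path pr lr pq.
move/dist_path_last; rewrite last_cat lr lq size_cat.
by rewrite /plen (spath_head hr) (spath_head hq).
Qed.

Lemma dist_nth_le x0 a b c q i j : spath e a b q -> i <= j < size q ->
  dist e c (nth x0 q j) <= dist e c (nth x0 q i) + (j - i).
Proof.
move=> hq hij; have := dist_spath_trans c (spath_segment x0 hq hij).
by rewrite /plen size_segment // => h; apply: leq_trans h _; lia.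
Qed.

Lemma dist_nth_succ x0 a b c q i : spath e a b q -> i.+1 < size q ->
  dist e c (nth x0 q i.+1) <= (dist e c (nth x0 q i)).+1.
Proof.
move=> hq hi; have := dist_nth_le x0 c hq (_ : i <= i.+1 < size q).
by rewrite subSnn addn1; apply; lia.
Qed.

Lemma dist_refl a : dist e a a = 0.
Proof. by apply/eqP; rewrite -leqn0 (dist_le_plen (q := [:: a])) //= eqxx. Qed.

Lemma dist_eq0 a b : dist e a b = 0 -> b = a.
Proof.
move=> h0; have [|q hq] := @shortest_spath a b; first by rewrite h0 (cardD1 a).
rewrite h0 /plen => hlen; case/(spathP a): hq => _ q0 <- _ _.
by rewrite hlen.
Qed.

Lemma spath_first_return x0 a b P P' iu ix w :
    spath e a b P -> spath e (nth x0 P iu) (nth x0 P ix) P' -> iu <= ix < size P ->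
    w \in P' -> w \in segment P ix.+1 (size P).-1 ->
  exists j m, [/\ 0 < j < plen P', ix < m < size P, nth x0 P' j = nth x0 P m &
    forall i, i < j -> nth x0 P' i \notin segment P m.+1 (size P).-1].
Proof.
move=> hP hP' hix hwP' hw; have hU := spath_uniq hP.
pose beyond y := y \in segment P ix.+1 (size P).-1.
have hhas : has beyond P' by apply/hasP; exists w.
pose j := find beyond P'.
have hj_beyond : beyond (nth x0 P' j) := nth_find x0 hhas.
case/(mem_segmentP x0): (hj_beyond) => m hm /= [hm_seg hm_size].
have [_ P'a P'b _ _] := (spathP x0 _ _ _).1 hP'.
have hj_first : j != 0.
  apply: contraTneq hj_beyond => ->; rewrite /beyond P'a.
  apply: (segments_disjoint (i1 := iu) (j1 := iu) hU); first lia.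
  by apply: mem_segment => //=; lia.
have hj_last : j != (size P').-1.
  apply: contraTneq hj_beyond => ->; rewrite /beyond P'b.
  apply: (segments_disjoint (i1 := ix) (j1 := ix) hU); first lia.
  by apply: mem_segment => //=; lia.
have hj : j < size P' by rewrite -has_find.
exists j, m; split.
- by rewrite /plen; lia.
- by lia.
- by rewrite hm.
- move=> i hi; apply: contraFN (before_find x0 hi) => /(mem_segmentP x0) [m' <- /= hm'].
  by rewrite /beyond mem_segment //=; lia.
Qed.

End SimplePaths.

Section FirstRepeatedLayer.
Variables (V : finType) (e : rel V) (s t : V) (P : seq V) (k p iu iv : nat).
Local Notation D := (dist e s).
Local Notation u := (nth s P iu).
Local Notation v := (nth s P iv).

Hypotheses (hP : spath e s t P) (hp1 : 1 <= p)
  (hpmin : forall i, 1 <= i < p -> count (fun w => D w == i) P <= 1)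
  (hiu_iv : iu < iv) (hiv : iv < size P)
  (hu : D u == p) (hv : D v == p)
  (hfirst : forall j, j < iv -> j != iu -> D (nth s P j) != p)
  (hPmin : forall q, spath e s t q -> D t + k <= plen q -> plen P <= plen q).

Lemma dist_lt_before_u j : j < iu -> D (nth s P j) < p.
Proof.
elim: j => [|j IH] hj.
  by case/(spathP e s): hP => _ -> _ _ _; rewrite dist_refl.
have hstep : D (nth s P j.+1) <= (D (nth s P j)).+1 by apply: dist_nth_succ hP _; lia.
have hne : D (nth s P j.+1) != p by apply: hfirst; lia.
by have := IH (ltnW hj); lia.
Qed.

Lemma dist_ge_from_u j : iu <= j < size P -> p <= D (nth s P j).
Proof.
move=> hj; rewrite leqNgt; apply/negP => hlt.
have P0 : nth s P 0 = s by case/(spathP e s): hP.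
have hju : iu < j.
  by rewrite ltn_neqAle (andP hj).1 andbT; apply: contraTneq hlt => <-; rewrite (eqP hu) ltnn.
case: (posnP (D (nth s P j))) => [/dist_eq0 | hpos].
  move=> Pj; suff : j = 0 by lia.
  by apply: (spath_nth_inj (x0 := s) hP); rewrite ?Pj ?P0 //; lia.
have [j0 hj0 hDj0] : exists2 j0, j0 < iu & D (nth s P j0) = D (nth s P j).
  apply: (@ivt_nat (fun m => D (nth s P m))) => [|m hm]; last by apply: dist_nth_succ hP _; lia.
  by rewrite /= P0 dist_refl (eqP hu); lia.
have hcount : 1 < count (fun w => D w == D (nth s P j)) P.
  by apply: (count_nth_gt1 (x0 := s) (i := j0)); rewrite /= ?hDj0 //; lia.
suff : count (fun w => D w == D (nth s P j)) P <= 1 by rewrite leqNgt hcount.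
by apply: hpmin; lia.
Qed.

Lemma p_le_iu : p <= iu.
Proof.
have P0 : nth s P 0 = s by case/(spathP e s): hP.
have : D u <= D (nth s P 0) + (iu - 0) by apply: dist_nth_le hP _; lia.
by rewrite P0 dist_refl (eqP hu); lia.
Qed.

Lemma shorter_spath_lt q : spath e s t q -> plen q < plen P -> plen q < D t + k.
Proof. by move=> hq; rewrite !ltnNge; apply: contra; apply: hPmin. Qed.

Lemma spath_suffix m : m < size P -> spath e (nth s P m) t (segment P m (size P).-1).
Proof.
move=> hm; have [_ _ Pt _ _] := (spathP e s _ _ _).1 hP.
by rewrite -[X in spath _ _ X]Pt; apply: spath_segment hP _; lia.
Qed.

Lemma spath_via_v : exists2 q, spath e s t q & plen q = p + ((size P).-1 - iv).
Proof.
have hU := spath_uniq hP.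
have [|R hR hRlen] := @shortest_spath _ e s v.
  by have := plen_spath_lt_card hP; have := p_le_iu; rewrite /plen (eqP hv); lia.
rewrite (eqP hv) in hRlen.
have hRlow : forall w, w \in R -> w != v -> D w < p.
  move=> w /(nthP s) [i + <-] => /= hi hne.
  have [R0 Rv] : nth s R 0 = s /\ nth s R (size R).-1 = v by case/(spathP e s): hR.
  have hip : i < p.
    case: (ltnP i p) => // hpi; have ip : i = (size R).-1 by move: hRlen; rewrite /plen; lia.
    by move: hne; rewrite ip Rv eqxx.
  have : D (nth s R i) <= D (nth s R 0) + (i - 0) by apply: dist_nth_le hR _; lia.
  by rewrite R0 dist_refl; lia.
have hS := spath_suffix hiv.
exists (R ++ behead (segment P iv (size P).-1)).
  apply: (spath_cat hR hS) => w hwR; rewrite behead_segment.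
  apply/negP => /(mem_segmentP s) [m hmw hm].
  have : p <= D w by rewrite -hmw dist_ge_from_u //; lia.
  case: (eqVneq w v) => [wv | /(hRlow w hwR)]; last by lia.
  suff : m = iv by lia.
  by apply: (spath_nth_inj (x0 := s) hP); rewrite ?hmw //; lia.
by rewrite (plen_cat hR hS) hRlen /plen size_segment //; lia.
Qed.

Lemma dist_target_bounds : D t <= p + ((size P).-1 - iv) < D t + k.
Proof.
have [q hq hqlen] := spath_via_v; rewrite -hqlen (dist_le_plen hq) /=.
by apply: shorter_spath_lt hq _; rewrite hqlen /plen; have := p_le_iu; lia.
Qed.

Lemma dist_far_after_v m : iv + 2 * k <= m < size P -> p + k < D (nth s P m).
Proof.
move=> hm; have := dist_spath_trans s (spath_suffix (_ : m < size P)).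
rewrite /plen size_segment; last lia.
by have := dist_target_bounds; lia.
Qed.

Lemma spath_reroute b P' j m :
    spath e u b P' -> (forall w, w \in P' -> p <= D w) ->
    j < size P' -> iu < m < size P -> nth s P' j = nth s P m ->
    (forall i, i < j -> nth s P' i \notin segment P m.+1 (size P).-1) ->
  exists2 q, spath e s t q & plen q = iu + j + ((size P).-1 - m).
Proof.
move=> hP' hlayer hj hm hjm hbefore.
have hU := spath_uniq hP; have hU' := spath_uniq hP'.
have P0 : nth s P 0 = s by case/(spathP e s): hP.
have P'0 : nth s P' 0 = u by case/(spathP e s): hP'.
have hiuP : 0 <= iu < size P by lia.
have hjP' : 0 <= j < size P' by lia.
have hmP : m <= (size P).-1 < size P by lia.
have hA : spath e s u (segment P 0 iu).
  by rewrite -[X in spath _ X]P0; apply: spath_segment hP hiuP.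
have hB : spath e u (nth s P m) (segment P' 0 j).
  by rewrite -hjm -[X in spath _ X]P'0; apply: spath_segment hP' hjP'.
have hC := spath_suffix (andP hm).2.
have hAB : spath e s (nth s P m) (segment P 0 iu ++ behead (segment P' 0 j)).
  (* [/=] turns the [eqType] sort produced by the generic [seq] lemmas back
     into the [finType] sort of [V], so that [lia] sees a single atom. *)
  apply: spath_cat hA hB _ => w /(mem_segmentP s) [i <- /= hi]; rewrite behead_segment.
  case: (ltnP i iu) => hiu.
    apply/negP => /(mem_segmentP s) [i' hi'w hi'].
    have hlow := dist_lt_before_u hiu.
    have := hlayer (nth s P' i') (mem_nth s (proj2 hi')).
    by rewrite hi'w; lia.
  have -> : i = iu by lia.
  rewrite -P'0; apply: (segments_disjoint (i1 := 0) (j1 := 0) hU') => //.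
  by apply: mem_segment => //=; lia.
exists ((segment P 0 iu ++ behead (segment P' 0 j)) ++ behead (segment P m (size P).-1)).
  apply: spath_cat hAB hC _.
  move=> w; rewrite mem_cat !behead_segment => /orP[hwA | /(mem_segmentP s) [i <- /= hi]].
    by apply: (segments_disjoint hU _ hwA); lia.
  case: (ltnP i j) => hij; first by apply: hbefore.
  have -> : i = j by lia.
  rewrite hjm; apply: (segments_disjoint (i1 := m) (j1 := m) hU) => //.
  by apply: mem_segment => //=; lia.
by rewrite (plen_cat hAB hC) (plen_cat hA hB) /plen !size_segment //; lia.
Qed.

Lemma first_return_window b P' j m :
    spath e u b P' -> plen P' <= k -> (forall w, w \in P' -> p <= D w) ->
    0 < j < plen P' -> iu + k < m < size P -> nth s P' j = nth s P m ->
    (forall i, i < j -> nth s P' i \notin segment P m.+1 (size P).-1) ->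
  iv <= m + k /\ m < iv + 2 * k.
Proof.
move=> hP' hP'len hlayer hj hm hjm hbefore.
have hjP' : j < size P' by move: hj; rewrite /plen; lia.
have hDm : D (nth s P m) < p + k.
  have P'0 : nth s P' 0 = u by case/(spathP e s): hP'.
  have : D (nth s P' j) <= D (nth s P' 0) + (j - 0) by apply: dist_nth_le hP' _; lia.
  by rewrite hjm P'0 (eqP hu); lia.
have := @dist_far_after_v m; have := dist_target_bounds; have := p_le_iu.
(* If m + k < iv, the rerouted path below is shorter than P, hence shorter than
   dist s t + k, but also longer than p + ((size P).-1 - iv) + k. *)
have [|q hq hqlen] := spath_reroute hP' hlayer hjP' _ hjm hbefore; first lia.
have := shorter_spath_lt hq; rewrite hqlen /plen; lia.
Qed.

End FirstRepeatedLayer.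

Theorem lemma4 (V : finType) (e : rel V) (s t : V) (k : nat)
  (reach : forall w : V, exists q, spath e s w q)
  (hk : 1 <= k)
  (nogap : forall (l : nat) (q : seq V), k <= l <= (2 * k).-1 ->
            spath e s t q -> plen q != dist e s t + l)
  (P : seq V) (hP : spath e s t P) (hPlong : dist e s t + k <= plen P)
  (hPmin : forall q : seq V, spath e s t q -> dist e s t + k <= plen q ->
            plen P <= plen q)
  (* p : the smallest i >= 1 such that L_i contains > 1 vertex of P *)
  (p : nat) (hp1 : 1 <= p)
  (hp2 : 1 < count (fun w => dist e s w == p) P)
  (hpmin : forall i, 1 <= i < p -> count (fun w => dist e s w == i) P <= 1)
  (* iu, iv : positions on P of u and v, the first two vertices of P in L_p *)
  (iu iv : nat) (hiu_iv : iu < iv) (hiv : iv < size P)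
  (hu : dist e s (nth s P iu) == p) (hv : dist e s (nth s P iv) == p)
  (hfirst : forall j, j < iv -> j != iu -> dist e s (nth s P j) != p) :
  let u := nth s P iu in
  let v := nth s P iv in
  let ix := iu + k in                               (* position of x *)
  let x := nth s P ix in
  let k' := minn k.+1 (size (segment P ix iv)) in
  let iy := iv.+1 - k' in                           (* position of y *)
  let k'' := minn (2 * k).+1 (size (segment P iv (size P).-1)) in
  let iz := (iv + k'').-1 in                        (* position of z *)
  forall P' : seq V,
    spath e u x P' -> plen P' <= k ->
    (forall w, w \in P' -> p <= dist e s w) ->      (* P' lies in G[U_{i>=p} L_i] *)
    (forall w, w \in P' -> w \notin segment P iy iz) ->
    forall w, w \in P' -> w \in segment P ix iv -> w = x.
Proof.
move=> u v ix x; cbv zeta => P' hP' hP'len hlayer havoid w hwP' hwx.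
case: (eqVneq w x) => // w_ne_x; exfalso.
case/(mem_segmentP s): (hwx) => mw hmw /= [hmw_seg hmw_size].
have hw_beyond : w \in segment P ix.+1 (size P).-1.
  have : mw != ix by apply: contraNneq w_ne_x => eq_ix; rewrite -hmw eq_ix.
  by rewrite -hmw => ?; apply: mem_segment => //=; lia.
have hix : iu <= ix < size P by lia.
have [j [m [hj hm hjm hbefore]]] := spath_first_return hP hP' hix hwP' hw_beyond.
have [lo hi] := first_return_window hP hp1 hpmin hiu_iv hiv hu hv hfirst hPmin
  hP' hP'len hlayer hj hm hjm hbefore.
have hjP' : j < size P' by move: hj; rewrite /plen; lia.
have hxv : ix <= iv < size P by lia.
have hvt : iv <= (size P).-1 < size P by lia.
have hmP : m < size P by lia.
have /negP[] := havoid _ (mem_nth s hjP').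
rewrite hjm; apply: mem_segment => //=.
by rewrite (size_segment hxv) (size_segment hvt); lia.
Qed.
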